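(* Let $G=(V,E)$ be a connected undirected $(D,c)$-uniform graph with $n=|V|$ vertices and $\delta$-mixing time $T(n)$ for $\delta=\frac{1}{(2cn)^2}$. For an edge set $S\subseteq E$ with $|S|=k$, the probability $P_{\ge 1}$ that a ''good start'' random walk of length $t$ traverses at least one edge of $S$ satisfies $P_{\geq 1} = \Omega\!\left(\frac{tk}{T(n)|E|}\right)$.
   Context: An undirected graph is $(D,c)$-uniform if every vertex has degree between $D$ and $cD$ (so $D$ is the minimum degree). A standard random walk moves at each step to a uniformly random neighbor; its stationary distribution is $\mu(v)=d_v/(2|E|)$. The $\delta$-mixing time is the smallest $t'$ such that for every starting vertex the distribution $\mu'$ after $t'$ steps satisfies $\|\mu-\mu'\|_\infty\le\delta$. A ''good start'' random walk of length $t$ starts at vertex $v$ with probability $d_v/(2|E|)$ and then performs $t$ steps of the standard random walk. Standing assumptions: $T(n)$ stays bounded as $n\to\infty$, $D$ grows with $n$, and $t=O(|E|/k)$. *)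

From mathcomp Require Import all_boot all_order all_algebra.
Set Implicit Arguments. Unset Strict Implicit. Unset Printing Implicit Defensive.
Import Order.TTheory GRing.Theory Num.Theory.
Local Open Scope ring_scope.

Section RW.
Variables (R : realFieldType) (V : finType) (e : rel V).

Definition simple_graph : Prop := symmetric e /\ irreflexive e.

Definition connected_graph : Prop := forall u v : V, connect e u v.

Definition deg (v : V) : nat := #|[set w | e v w]|.

Definition edges : {set {set V}} :=
  [set A : {set V} | [exists u, exists v, e u v && (A == [set u; v])]].

Definition nedges : nat := #|edges|.

Definition uniform (D : nat) (c : R) : Prop :=
  forall v : V, (D <= deg v)%N /\ (deg v)%:R <= c * D%:R.

Definition stat (v : V) : R := (deg v)%:R / (2 * (nedges)%:R).

Definition trans (u w : V) : R := if e u w then ((deg u)%:R)^-1 else 0.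

Definition step (p : V -> R) : V -> R := fun w => \sum_(u : V) p u * trans u w.

Definition dirac (v : V) : V -> R := fun w => if w == v then 1 else 0.

Definition dist_after (t : nat) (v : V) : V -> R := iter t step (dirac v).

Definition mixed_at (delta : R) (t : nat) : Prop :=
  forall v w : V, `|stat w - dist_after t v w| <= delta.

Definition is_mixing_time (delta : R) (T : nat) : Prop :=
  mixed_at delta T /\ forall t' : nat, (t' < T)%N -> ~ mixed_at delta t'.

Definition walk_prob (t : nat) (w : {ffun 'I_t.+1 -> V}) : R :=
  stat (w ord0) *
  \prod_(i < t) trans (w (widen_ord (leqnSn t) i)) (w (lift ord0 i)).

Definition traverses (S : {set {set V}}) (t : nat) (w : {ffun 'I_t.+1 -> V})
  : bool :=
  [exists i : 'I_t, [set w (widen_ord (leqnSn t) i); w (lift ord0 i)] \in S].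

Definition P_ge1 (S : {set {set V}}) (t : nat) : R :=
  \sum_(w : {ffun 'I_t.+1 -> V} | traverses S w) walk_prob w.

End RW.

From Pilot Require Import Defs.
From mathcomp Require Import all_boot all_order all_algebra.
From mathcomp Require Import zify ring lra.
Set Implicit Arguments. Unset Strict Implicit. Unset Printing Implicit Defensive.
Import Order.TTheory GRing.Theory Num.Theory.
Local Open Scope ring_scope.

(* Look at the walk only at the strided times [0, T + 1, 2 (T + 1), ...] and let
   [N] count those at which it crosses an edge of [S].  Since the walk starts
   stationary, [E N = m k / |E|] for [m] strided times; two strided times are
   more than [T] apart, so the walk mixes in between and each pair contributes at
   most [(k / |E|) (2 k) (1 / (2 |E|) + delta)], whence [E N^2 <= E N + 5/4 (E N)^2]
   for [delta <= 1 / (8 |E|)].  As the indicator of [N >= 1] is at least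
   [(3 N - N^2) / 2] on integers, [P >= 3/8 E N] when [E N <= 1];
   taking [m] about [min (t / T) (|E| / k)] gives the bound [t k / (T |E|)]. *)

Lemma bonferroni_nat (R : realFieldType) (n : nat) :
  3 / 2 * n%:R - 1 / 2 * n%:R ^+ 2 <= (0 < n)%:R :> R.
Proof.
case: n => [|n]; first by rewrite mulr0 expr0n /= mulr0 subr0.
(* for integers [n >= 1] this is [(n - 1) (n - 2) >= 0] *)
case: n => [|n]; first by rewrite /= !mulr1n expr1n; lra.
have n0 : 0 <= n%:R :> R by rewrite ler0n.
have nn0 := mulr_ge0 n0 n0.
have -> : (0 < n.+2)%:R = 1 :> R by [].
have -> : n.+2%:R = n%:R + 2 :> R by rewrite -addn2 natrD.
rewrite expr2; lra.
Qed.

Section PathSums.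
Variables (R : nzRingType) (V : finType).

Definition push (g : V -> V -> R) (p : V -> R) : V -> R :=
  fun y => \sum_x p x * g x y.

Fixpoint push_seq (t : nat) (h : nat -> V -> V -> R) (p : V -> R) : V -> R :=
  if t is t'.+1 then push_seq t' (fun k => h k.+1) (push (h 0%N) p) else p.

Definition ffun_cons t (x : V) (w : {ffun 'I_t.+1 -> V}) : {ffun 'I_t.+2 -> V} :=
  [ffun i : 'I_t.+2 => if val i is j.+1 then w (inord j) else x].

Lemma ffun_cons0 t x (w : {ffun 'I_t.+1 -> V}) (k : 'I_t.+2) :
  val k = 0%N -> ffun_cons x w k = x.
Proof. by move=> k0; rewrite ffunE k0. Qed.

Lemma ffun_consS t x (w : {ffun 'I_t.+1 -> V}) (k : 'I_t.+2) (j : 'I_t.+1) :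
  val k = (val j).+1 -> ffun_cons x w k = w j.
Proof. by move=> kj; rewrite ffunE kj; congr (w _); apply: val_inj; rewrite /= inordK. Qed.

Lemma big_ffun_cons t (F : {ffun 'I_t.+2 -> V} -> R) :
  \sum_w F w = \sum_x \sum_(w : {ffun 'I_t.+1 -> V}) F (ffun_cons x w).
Proof.
rewrite pair_big /= (reindex (fun p : V * {ffun 'I_t.+1 -> V} => ffun_cons p.1 p.2)) //=.
exists (fun w : {ffun 'I_t.+2 -> V} => (w ord0, [ffun j : 'I_t.+1 => w (lift ord0 j)])).
  move=> [x w] _ /=; congr pair; first by rewrite ffun_cons0.
  by apply/ffunP => j; rewrite ffunE; apply: ffun_consS.
move=> w _ /=; apply/ffunP => k; case kE: (val k) => [|j].
  by rewrite ffun_cons0 //; congr (w _); apply: val_inj.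
have jt : (j < t.+1)%N by have := ltn_ord k; rewrite kE.
rewrite (@ffun_consS _ _ _ _ (Ordinal jt)) // ffunE; congr (w _); apply: val_inj.
by rewrite /= kE.
Qed.

Lemma big_ffun1 (F : {ffun 'I_1 -> V} -> R) : \sum_w F w = \sum_x F [ffun => x].
Proof.
rewrite (reindex (fun x : V => [ffun => x])) //.
exists (fun w : {ffun 'I_1 -> V} => w ord0); first by move=> x _; rewrite ffunE.
move=> w _; apply/ffunP => k; rewrite ffunE; congr (w _); apply: val_inj.
by case: k => [[]].
Qed.

Lemma big_path_push_seq t (h : nat -> V -> V -> R) (p : V -> R) :
  \sum_(w : {ffun 'I_t.+1 -> V}) p (w ord0) *
     \prod_(i < t) h i (w (widen_ord (leqnSn t) i)) (w (lift ord0 i))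
  = \sum_y push_seq t h p y.
Proof.
elim: t h p => [|t IH] h p /=.
  by rewrite big_ffun1; apply: eq_bigr => x _; rewrite big_ord0 mulr1 ffunE.
rewrite big_ffun_cons -IH exchange_big /=; apply: eq_bigr => w _.
rewrite /push big_distrl /=; apply: eq_bigr => x _.
rewrite big_ord_recl (@ffun_cons0 _ _ _ ord0) // (@ffun_cons0 _ _ _ (widen_ord _ ord0)) //.
rewrite (@ffun_consS _ _ _ (lift ord0 ord0) ord0) // -!mulrA; congr (_ * (_ * _)).
apply: eq_bigr => i _.
by rewrite (@ffun_consS _ _ _ _ (widen_ord (leqnSn t) i)) ?(@ffun_consS _ _ _ _ (lift ord0 i)).
Qed.

Lemma push_seq_ext t h h' p p' :
  (forall k, (k < t)%N -> h k =2 h' k) -> p =1 p' -> push_seq t h p =1 push_seq t h' p'.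
Proof.
elim: t h h' p p' => [|t IH] h h' p p' hh hp y //=.
apply: IH => [k kt x z|x]; first exact: hh.
by apply: eq_bigr => z _; rewrite hp hh.
Qed.

Lemma push_seqD a b h p :
  push_seq (a + b) h p =1 push_seq b (fun k => h (k + a)%N) (push_seq a h p).
Proof.
elim: a h p => [|a IH] h p y /=.
  by apply: push_seq_ext => // k _ x z; rewrite addn0.
by rewrite IH; apply: push_seq_ext => // k _ x z; rewrite addnS.
Qed.

End PathSums.

Section Walk.
Variables (R : realFieldType) (V : finType) (e : rel V).

Local Notation trans := (@trans R V e).
Local Notation step := (@step R V e).
Local Notation stat := (@stat R V e).
Local Notation deg := (deg e).
Local Notation dirac := (@Defs.dirac R V).
Local Notation nedges := (nedges e).

Lemma iter_step_ext n p p' : p =1 p' -> iter n step p =1 iter n step p'.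
Proof.
move=> pp'; elim: n => [|n IH] y //=.
by apply: eq_bigr => x _; rewrite IH.
Qed.

Lemma push_seq_trans n h p :
  (forall k, (k < n)%N -> h k =2 trans) -> push_seq n h p =1 iter n step p.
Proof.
elim: n h p => [|n IH] h p hh y //=.
rewrite IH => [|k kn]; last exact: hh.
rewrite -[step _ y]/(iter n.+1 step p y) iterSr; apply: iter_step_ext => x.
by apply: eq_bigr => z _; rewrite hh.
Qed.

Lemma push_seq_split i j h p :
  (i < j)%N -> (forall k, (i < k < j)%N -> h k =2 trans) ->
  push_seq j h p =1 iter (j - i.+1) step (push (h i) (push_seq i h p)).
Proof.
move=> ij hh y; have -> : j = (i + (j - i.+1).+1)%N by lia.
rewrite push_seqD /= push_seq_trans => [|k kj x z]; last by apply: hh; lia.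
have -> : (i + (j - i.+1).+1 - i.+1 = j - i.+1)%N by lia.
by apply: iter_step_ext => x; apply: eq_bigr => z _; rewrite add0n.
Qed.

Lemma stat_ge0 x : 0 <= stat x.
Proof. by rewrite divr_ge0 ?mulr_ge0. Qed.

Lemma trans_ge0 x y : 0 <= trans x y.
Proof. by rewrite /Defs.trans; case: (e x y); rewrite ?invr_ge0. Qed.

Lemma iter_step_ge0 n p : (forall x, 0 <= p x) -> forall y, 0 <= iter n step p y.
Proof.
move=> p0; elim: n => [|n IH] y //=.
by apply: sumr_ge0 => x _; rewrite mulr_ge0 ?trans_ge0.
Qed.

Lemma iter_step_lin n p y : iter n step p y = \sum_b p b * iter n step (dirac b) y.
Proof.
elim: n y => [|n IH] y.
  rewrite /= (bigD1 y) //= /dirac eqxx mulr1 big1 ?addr0 // => b yb.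
  by rewrite eq_sym (negbTE yb) mulr0.
have stepE q : step q y = \sum_u q u * trans u y by [].
rewrite iterS stepE; under eq_bigr => u _ do rewrite (IH u) big_distrl /=.
rewrite exchange_big /=; apply: eq_bigr => b _.
by rewrite stepE mulr_sumr; apply: eq_bigr => u _; rewrite mulrA.
Qed.

Hypothesis deg_gt0 : forall v, (0 < deg v)%N.
Hypothesis e_sym : symmetric e.

Lemma sum_trans u : \sum_w trans u w = 1.
Proof.
rewrite /Defs.trans -big_mkcond /= sumr_const.
have -> : #|[pred w | e u w]| = deg u by rewrite /deg /Defs.deg cardsE.
by rewrite -[_ *+ deg u]mulr_natr mulVf // pnatr_eq0 -lt0n.
Qed.

Lemma iter_step_mass n p : \sum_y iter n step p y = \sum_y p y.
Proof.
elim: n => [|n IH] //=; rewrite -IH exchange_big /=.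
by apply: eq_bigr => x _; rewrite -mulr_sumr sum_trans mulr1.
Qed.

Lemma stat_step : step stat =1 stat.
Proof.
move=> y; transitivity (\sum_x (if e x y then (2 * nedges%:R)^-1 else 0 : R)).
  apply: eq_bigr => x _; rewrite /Defs.trans; case: ifP => _; last by rewrite mulr0.
  by rewrite /Defs.stat mulrAC mulfV ?mul1r // pnatr_eq0 -lt0n.
rewrite -big_mkcond /= sumr_const /Defs.stat /Defs.deg cardsE.
have -> : #|e^~ y| = #|e y| by apply: eq_card => x; rewrite unfold_in /= e_sym.
by rewrite [RHS]mulr_natl.
Qed.

Lemma iter_step_stat n : iter n step stat =1 stat.
Proof.
elim: n => [|n IH] y //=.
by rewrite -[step _ y]/(iter 1 step _ y) (iter_step_ext 1 IH) /= stat_step.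
Qed.

Variables (T : nat) (delta : R).
Hypothesis delta_ge0 : 0 <= delta.
Hypothesis mixed : forall v w, iter T step (dirac v) w <= stat w + delta.

Lemma mixed_after g b x : (T <= g)%N -> iter g step (dirac b) x <= stat x + delta.
Proof.
move=> Tg; rewrite -(subnKC Tg) iterD iter_step_lin.
set pi := iter (g - T) step (dirac b).
have pi0 z : 0 <= pi z by apply: iter_step_ge0 => u; rewrite /dirac; case: ifP.
have pi1 : \sum_z pi z = 1.
  rewrite iter_step_mass (bigD1 b) //= /dirac eqxx big1 ?addr0 // => u ub.
  by rewrite (negbTE ub).
apply: le_trans (_ : \sum_z pi z * (stat x + delta) <= _).
  by apply: ler_sum => z _; apply: ler_wpM2l.
by rewrite -mulr_suml pi1 mul1r.
Qed.

Lemma sum_push_seq_split i j h p :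
  (i < j)%N -> (forall k, (i < k < j)%N -> h k =2 trans) ->
  \sum_y push_seq j h p y = \sum_y push (h i) (push_seq i h p) y.
Proof.
move=> ij hh; under eq_bigr do rewrite (push_seq_split _ ij hh).
exact: iter_step_mass.
Qed.

Variable S : {set {set V}}.

Definition crosses (x y : V) : R := if [set x; y] \in S then 1 else 0.

Definition cross_kernel (x y : V) : R := trans x y * crosses x y.

Definition ncross : nat := #|[set p : V * V | e p.1 p.2 && ([set p.1; p.2] \in S)]|.

Local Notation q := (ncross%:R / (2 * nedges%:R) : R).

Lemma crosses01 x y : crosses x y * crosses x y = crosses x y.
Proof. by rewrite /crosses; case: ifP; rewrite ?mulr1 ?mulr0. Qed.

Lemma crosses_ge0 x y : 0 <= crosses x y.
Proof. by rewrite /crosses; case: ifP. Qed.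

Lemma sum_cross_arcs (a : R) :
  \sum_y \sum_x (if e x y && ([set x; y] \in S) then a else 0) = a * ncross%:R.
Proof.
by rewrite exchange_big pair_big /= -big_mkcond /= sumr_const /ncross cardsE mulr_natr.
Qed.

Lemma cross_mass_stat : \sum_y push cross_kernel stat y = q.
Proof.
rewrite mulrC -sum_cross_arcs; apply: eq_bigr => y _; apply: eq_bigr => x _.
rewrite /cross_kernel /crosses /Defs.trans /Defs.stat.
case: (e x y); case: ([set x; y] \in S); rewrite /= ?mulr0 ?mul0r ?mulr1 //; try by rewrite mulr0.
by rewrite mulrAC mulfV ?mul1r // pnatr_eq0 -lt0n.
Qed.

(* After [T] steps each arc [(x, y)] is crossed with probability at most
   [(stat x + delta) / deg x <= 1 / (2 |E|) + delta]. *)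
Lemma cross_mass_mixed mu g : (forall x, 0 <= mu x) -> (T <= g)%N ->
  \sum_y push cross_kernel (iter g step mu) y
  <= (\sum_b mu b) * ncross%:R * ((2 * nedges%:R)^-1 + delta).
Proof.
move=> mu0 Tg; rewrite -mulrA [ncross%:R * _]mulrC mulrA -sum_cross_arcs.
apply: ler_sum => y _; apply: ler_sum => x _.
have mass0 : 0 <= \sum_b mu b by apply: sumr_ge0.
have iter_le : iter g step mu x <= (\sum_b mu b) * (stat x + delta).
  rewrite iter_step_lin mulr_suml; apply: ler_sum => b _.
  exact/ler_wpM2l/mixed_after.
rewrite /cross_kernel /crosses /Defs.trans.
case: (e x y); case: ([set x; y] \in S); rewrite /= ?mulr0 ?mul0r ?mulr1 //; try by rewrite mulr0.
have deg_pos : 0 < (deg x)%:R :> R by rewrite ltr0n.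
apply: le_trans (_ : (\sum_b mu b) * (stat x + delta) / (deg x)%:R <= _).
  by apply: ler_wpM2r; rewrite ?invr_ge0 ?ler0n.
rewrite -mulrA; apply: ler_wpM2l => //; rewrite mulrDl lerD //.
  by rewrite /Defs.stat mulrAC mulfV ?mul1r // gt_eqF.
by apply: ler_piMr; rewrite ?invf_le1 ?ler1n.
Qed.

Variable t : nat.
Local Notation wid := (widen_ord (leqnSn t)).
Local Notation walk_prob := (@walk_prob R V e t).

Definition crossed_at (i : 'I_t) (w : {ffun 'I_t.+1 -> V}) : R :=
  crosses (w (wid i)) (w (lift ord0 i)).

Definition marked_kernel (A : pred nat) (k : nat) (x y : V) : R :=
  trans x y * (if A k then crosses x y else 1).

Lemma walk_prob_marked (A : pred nat) w :
  walk_prob w * \prod_(i < t | A i) crossed_at i w =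
  stat (w ord0) * \prod_(k < t) marked_kernel A k (w (wid k)) (w (lift ord0 k)).
Proof.
rewrite /Defs.walk_prob -mulrA (big_mkcond (fun i : 'I_t => A i)) -big_split /=.
by congr (_ * _); apply: eq_bigr => k _; rewrite /marked_kernel; case: (A k).
Qed.

Lemma walk_prob_ge0 w : 0 <= walk_prob w.
Proof. by rewrite mulr_ge0 ?stat_ge0 // prodr_ge0 // => i _; apply: trans_ge0. Qed.

Lemma expect_crossed_at i : \sum_w walk_prob w * crossed_at i w = q.
Proof.
pose A := pred1 (val i).
have -> : \sum_w walk_prob w * crossed_at i w =
          \sum_w walk_prob w * \prod_(k < t | A k) crossed_at k w.
  by apply: eq_bigr => w _; rewrite (big_pred1 i).
under eq_bigr do rewrite walk_prob_marked.
rewrite big_path_push_seq (@sum_push_seq_split i) //; last first.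
  by move=> k /andP[ik _] x y; rewrite /marked_kernel /A /= gtn_eqF // mulr1.
rewrite -cross_mass_stat; apply: eq_bigr => y _; apply: eq_bigr => x _.
rewrite /marked_kernel /A /= eqxx push_seq_trans ?iter_step_stat // => k ki u v.
by rewrite ltn_eqF // mulr1.
Qed.

Lemma expect_crossed_at2 (i j : 'I_t) : (i + T < j)%N ->
  \sum_w walk_prob w * (crossed_at i w * crossed_at j w) <=
  q * ncross%:R * ((2 * nedges%:R)^-1 + delta).
Proof.
move=> ij; pose A := [pred k : nat | (k == i) || (k == j)].
have ineqj : i != j by apply/eqP => ij'; move: ij; rewrite ij'; lia.
have -> : \sum_w walk_prob w * (crossed_at i w * crossed_at j w) =
          \sum_w walk_prob w * \prod_(k < t | A k) crossed_at k w.
  apply: eq_bigr => w _; rewrite (bigD1 i) /= ?eqxx // (big_pred1 j) // => k /=.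
  case: (eqVneq k i) => [->|kni]; first by rewrite eqxx andbF (negbTE ineqj).
  by rewrite andbT; move: kni; rewrite -val_eqE => /negbTE ->.
under eq_bigr do rewrite walk_prob_marked.
rewrite big_path_push_seq (@sum_push_seq_split j) //; last first.
  by move=> k /andP[jk _] x y; rewrite /marked_kernel /A /= !gtn_eqF ?mulr1 //; lia.
pose mu := push cross_kernel stat.
have mu0 x : 0 <= mu x.
  apply: sumr_ge0 => u _; rewrite /cross_kernel.
  by apply: mulr_ge0 (stat_ge0 _) (mulr_ge0 (trans_ge0 _ _) (crosses_ge0 _ _)).
rewrite -cross_mass_stat.
have -> : \sum_y push (marked_kernel A j) (push_seq j (marked_kernel A) stat) y =
          \sum_y push cross_kernel (iter (j - i.+1) step mu) y.
  apply: eq_bigr => y _; apply: eq_bigr => x _; congr (_ * _); last first.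
    by rewrite /marked_kernel /A /= eqxx orbT.
  have ij' : (i < j)%N by lia.
  rewrite (push_seq_split _ ij') => [|k /andP[ik kj] u v]; last first.
    by rewrite /marked_kernel /A /= gtn_eqF // ltn_eqF // mulr1.
  apply: iter_step_ext => u; apply: eq_bigr => v _; congr (_ * _); last first.
    by rewrite /marked_kernel /A /= eqxx.
  rewrite push_seq_trans ?iter_step_stat // => k ki a b.
  by rewrite /marked_kernel /A /= !ltn_eqF ?mulr1 //; lia.
by apply: cross_mass_mixed => //; lia.
Qed.

Section Spaced.
Variables (m : nat) (sigma : 'I_m -> 'I_t).
Hypothesis sigma_spaced : forall s s', s != s' ->
  ((sigma s + T < sigma s')%N || (sigma s' + T < sigma s)%N).

Definition ncrossed (w : {ffun 'I_t.+1 -> V}) : R := \sum_s crossed_at (sigma s) w.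

Lemma expect_ncrossed : \sum_w walk_prob w * ncrossed w = m%:R * q.
Proof.
under eq_bigr do rewrite mulr_sumr.
rewrite exchange_big /=; under eq_bigr do rewrite expect_crossed_at.
by rewrite sumr_const card_ord [m%:R * _]mulr_natl.
Qed.

Lemma expect_ncrossed_sq :
  \sum_w walk_prob w * ncrossed w ^+ 2 <=
  m%:R * q + m%:R ^+ 2 * (q * ncross%:R * ((2 * nedges%:R)^-1 + delta)).
Proof.
set B := q * ncross%:R * _.
have B0 : 0 <= B by rewrite !mulr_ge0 ?addr_ge0 ?invr_ge0 ?mulr_ge0.
have -> : \sum_w walk_prob w * ncrossed w ^+ 2 =
    \sum_s \sum_s' \sum_w walk_prob w * (crossed_at (sigma s) w * crossed_at (sigma s') w).
  transitivity (\sum_w \sum_s \sum_s'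
      walk_prob w * (crossed_at (sigma s) w * crossed_at (sigma s') w)).
    apply: eq_bigr => w _; rewrite expr2 /ncrossed mulr_suml mulr_sumr.
    by apply: eq_bigr => s _; rewrite !mulr_sumr.
  by rewrite exchange_big; apply: eq_bigr => s _; rewrite exchange_big.
have -> : m%:R * q + m%:R ^+ 2 * B = \sum_(s < m) (q + m%:R * B).
  by rewrite sumr_const card_ord; ring.
apply: ler_sum => s _; rewrite (bigD1 s) //= lerD //.
  by under eq_bigr do rewrite [crossed_at _ _ * _]crosses01; rewrite expect_crossed_at.
apply: le_trans (_ : \sum_(s' < m | s' != s) B <= _).
  apply: ler_sum => s' s's; case/orP: (sigma_spaced s's) => spaced.
    by under eq_bigr do rewrite [crossed_at _ _ * _]mulrC; apply: expect_crossed_at2.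
  exact: expect_crossed_at2.
apply: le_trans (_ : \sum_(s' < m) B <= _).
  by rewrite [X in _ <= X](bigD1 s) //= lerDr.
by rewrite sumr_const card_ord [m%:R * _]mulr_natl.
Qed.

Lemma ncrossedE w :
  ncrossed w = #|[set s | [set w (wid (sigma s)); w (lift ord0 (sigma s))] \in S]|%:R.
Proof.
rewrite /ncrossed /crossed_at /crosses -big_mkcond /= sumr_const cardsE.
by rewrite -[in RHS]mulr_natr mul1r.
Qed.

Lemma ncrossed_bonferroni w :
  walk_prob w * (3 / 2 * ncrossed w - 1 / 2 * ncrossed w ^+ 2) <=
  (if traverses S w then walk_prob w else 0).
Proof.
rewrite ncrossedE; set A := [set s | _].
apply: le_trans (_ : walk_prob w * (0 < #|A|)%:R <= _).
  by apply: ler_wpM2l; [apply: walk_prob_ge0 | apply: bonferroni_nat].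
case: (set_0Vmem A) => [->|[s sA]].
  by rewrite cards0 /= mulr0; case: ifP => // _; apply: walk_prob_ge0.
have -> : traverses S w by apply/existsP; exists (sigma s); rewrite inE in sA.
by rewrite (_ : 0 < #|A|)%N ?mulr1 //; apply/card_gt0P; exists s.
Qed.

Lemma P_ge1_second_moment :
  3 / 2 * (m%:R * q) -
  1 / 2 * (m%:R * q + m%:R ^+ 2 * (q * ncross%:R * ((2 * nedges%:R)^-1 + delta)))
  <= P_ge1 R e S t.
Proof.
rewrite /P_ge1 big_mkcond /=; apply: le_trans (ler_sum _ (fun w _ => ncrossed_bonferroni w)).
have -> : \sum_w walk_prob w * (3 / 2 * ncrossed w - 1 / 2 * ncrossed w ^+ 2) =
    3 / 2 * \sum_w walk_prob w * ncrossed w - 1 / 2 * \sum_w walk_prob w * ncrossed w ^+ 2.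
  by rewrite !mulr_sumr -sumrB; apply: eq_bigr => w _; ring.
rewrite expect_ncrossed lerD2l lerN2; apply: ler_wpM2l; first lra.
exact: expect_ncrossed_sq.
Qed.

Lemma P_ge1_ge_spaced : (0 < nedges)%N -> delta <= (8 * nedges%:R)^-1 ->
  m%:R * q <= 1 :> R -> 3 / 8 * (m%:R * q) <= P_ge1 R e S t.
Proof.
move=> E0 delta_le mq_le1.
have E0' : nedges%:R != 0 :> R by rewrite pnatr_eq0 -lt0n.
have q0 : 0 <= q by rewrite divr_ge0 ?mulr_ge0.
have B_le : q * ncross%:R * ((2 * nedges%:R)^-1 + delta) <= 5 / 4 * q ^+ 2.
  have -> : 5 / 4 * q ^+ 2 = q * ncross%:R * ((2 * nedges%:R)^-1 + (8 * nedges%:R)^-1).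
    by rewrite [in RHS](_ : ncross%:R = q * (2 * nedges%:R)); field.
  by apply: ler_wpM2l; [rewrite mulr_ge0 | rewrite lerD2l].
have := P_ge1_second_moment.
have mB := ler_wpM2l (sqr_ge0 m%:R) B_le.
have mq0 : 0 <= m%:R * q by rewrite mulr_ge0.
have mq_sq : 0 <= m%:R * q * (1 - m%:R * q) by rewrite mulr_ge0 // subr_ge0.
rewrite !expr2 in mB *; nra.
Qed.

End Spaced.

Lemma P_ge1_ge_strided m : (0 < nedges)%N -> delta <= (8 * nedges%:R)^-1 ->
  (m <= (t + T) %/ T.+1)%N -> m%:R * q <= 1 -> 3 / 8 * (m%:R * q) <= P_ge1 R e S t.
Proof.
move=> E0 delta_le m_le; have stride_lt (s : 'I_m) : (s * T.+1 < t)%N.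
  have := leq_trans (ltn_ord s) m_le; rewrite leq_divRL // mulSn; lia.
apply: (@P_ge1_ge_spaced _ (fun s => Ordinal (stride_lt s))) => // s s' s's' /=.
have stride_sep (a b : 'I_m) : (a < b)%N -> (a * T.+1 + T < b * T.+1)%N.
  by move=> ab; have := leq_mul ab (leqnn T.+1); rewrite mulSn; lia.
case: (ltngtP s s') => [/stride_sep ->|/stride_sep ->|ss'] //; first by rewrite orbT.
by move: s's'; rewrite (val_inj ss') eqxx.
Qed.

End Walk.

Section EdgeCount.
Variables (V : finType) (e : rel V).
Hypotheses (e_irr : irreflexive e) (e_sym : symmetric e).

Lemma set2_eqE (x y u v : V) : u != v ->
  ([set x; y] == [set u; v]) = ((x == u) && (y == v)) || ((x == v) && (y == u)).
Proof.
move=> uv; apply/idP/idP; last first.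
  by case/orP=> /andP[/eqP -> /eqP ->] //; rewrite setUC.
move/eqP=> xy_uv.
have u_xy : u \in [set x; y] by rewrite xy_uv !inE eqxx.
have v_xy : v \in [set x; y] by rewrite xy_uv !inE eqxx orbT.
have x_uv : x \in [set u; v] by rewrite -xy_uv !inE eqxx.
have y_uv : y \in [set u; v] by rewrite -xy_uv !inE eqxx orbT.
move: u_xy v_xy x_uv y_uv; rewrite !inE.
case/orP=> /eqP ?; case/orP=> /eqP ?; case/orP=> /eqP ?; case/orP=> /eqP ?;
  subst; rewrite ?eqxx ?andbT ?orbT //=; by rewrite eqxx in uv.
Qed.

Lemma ncross_card (S : {set {set V}}) : S \subset edges e -> ncross e S = (2 * #|S|)%N.
Proof.
move=> SE; rewrite /ncross -sum1_card.
rewrite (partition_big (fun p : V * V => [set p.1; p.2]) (mem S)); last first.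
  by move=> p; rewrite inE => /andP[].
rewrite mulnC -sum_nat_const /=; apply: eq_bigr => A AS.
have := subsetP SE A AS; rewrite inE => /existsP[u] /existsP[v] /andP[uv /eqP AE].
have nuv : u != v by apply: contraTneq uv => ->; rewrite e_irr.
have -> : 2%N = #|[set (u, v); (v, u)]| by rewrite cards2 xpair_eqE negb_and nuv.
rewrite -sum1_card; apply: eq_bigl => -[x y]; rewrite !inE AE set2_eqE //= !xpair_eqE.
apply/idP/idP; first by case/andP.
have uvS : [set u; v] \in S by rewrite -AE.
case/orP => /andP[/eqP -> /eqP ->]; first by rewrite uv uvS !eqxx.
by rewrite e_sym uv setUC uvS !eqxx orbT.
Qed.

Lemma nedges_le : (2 * nedges e <= #|V| * #|V|)%N.
Proof. by rewrite -(ncross_card (subxx _)) /ncross -card_prod max_card. Qed.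

End EdgeCount.

Lemma mixing_delta_le (R : realFieldType) (c : R) (n E : nat) :
  1 <= c -> (0 < E)%N -> (2 * E <= n * n)%N ->
  ((2 * c * n%:R) ^+ 2)^-1 <= (8 * E%:R)^-1.
Proof.
move=> c1 E0 En.
have nn : 2 * E%:R <= n%:R * n%:R :> R by rewrite -natrM -natrM ler_nat.
have n1 : 1 <= n%:R :> R by rewrite ler1n lt0n; apply: contraTneq En => ->; rewrite -ltnNge muln_gt0.
have E1 : 1 <= E%:R :> R by rewrite ler1n.
rewrite lef_pV2 ?posrE ?exprn_gt0 ?mulr_gt0 //; try lra.
have cc : 0 <= (c * c - 1) * (n%:R * n%:R) by rewrite mulr_ge0 //; nra.
rewrite expr2; nra.
Qed.

Lemma mixing_time_upper (R : realFieldType) (V : finType) (e : rel V) delta T :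
  is_mixing_time e delta T -> forall v w, iter T (step e) (dirac R v) w <= stat R e w + delta.
Proof. by case=> mixT _ v w; have /ler_normlP[] := mixT v w; rewrite /dist_after; lra. Qed.

(* [m = min (ceil (t / (T + 1))) (floor (E / k))]: enough strided times fit into
   [t] steps, and either they cover [t] or they exhaust the budget [m k <= E]. *)
Lemma exists_stride_count t T k E : (0 < k)%N -> (k <= E)%N -> exists m,
  [/\ (m <= (t + T) %/ T.+1)%N, (m * k <= E)%N & (t <= m * T.+1)%N \/ (E <= 2 * (m * k))%N].
Proof.
move=> k0 kE; exists (minn ((t + T) %/ T.+1) (E %/ k)); split.
- exact: geq_minl.
- by rewrite -leq_divRL // geq_minr.
case: (leqP ((t + T) %/ T.+1) (E %/ k)) => _; [left|right].
  by have := ltn_ceil (t + T) (ltn0Sn T); lia.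
have Ek0 : (0 < E %/ k)%N by rewrite divn_gt0.
by have := ltn_ceil E k0; have := leq_mul Ek0 (leqnn k); lia.
Qed.

Lemma scaled_rate_le (R : realFieldType) (a : R) (t T k E m : nat) :
  (0 < T)%N -> (0 < E)%N -> t%:R * k%:R <= a * E%:R ->
  (t <= m * T.+1)%N \/ (E <= 2 * (m * k))%N ->
  (8 * (1 + `|a|))^-1 * (t%:R * k%:R) / (T%:R * E%:R) <= 3 / 8 * (m%:R * (k%:R / E%:R)).
Proof.
move=> T0 E0 tka cases; have a0 := normr_ge0 a.
have T1 : 1 <= T%:R :> R by rewrite ler1n.
have E1 : 0 < E%:R :> R by rewrite ltr0n.
set C := (8 * _)^-1; have C0 : 0 < C by rewrite invr_gt0; lra.
have C8 : C * (1 + `|a|) = 1 / 8 by rewrite /C; field; lra.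
set q := k%:R / E%:R; have q0 : 0 <= q by rewrite divr_ge0 ?ler0n.
have -> : C * (t%:R * k%:R) / (T%:R * E%:R) = C * (t%:R / T%:R * q).
  by rewrite -mulrA -mulf_div.
have mq0 : 0 <= m%:R * q by rewrite mulr_ge0 ?ler0n.
case: cases => cover; rewrite -(ler_nat R) !natrM in cover.
  rewrite -natr1 in cover; have : t%:R / T%:R * q <= 2 * m%:R * q.
    by rewrite ler_wpM2r // ler_pdivrMr; [have := ler0n R m; nra | lra].
  move/(ler_wpM2l (ltW C0)); nra.
have : t%:R / T%:R * q <= `|a|.
  rewrite mulrAC ler_pdivrMr; last lra.
  have tqa : t%:R * q <= a by rewrite mulrA ler_pdivrMr.
  have := ler_norm a; nra.
have : 1 / 2 <= m%:R * q by rewrite mulrA ler_pdivlMr //; lra.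
move=> half /(ler_wpM2l (ltW C0)); have := mulr_ge0 (ltW C0) a0; nra.
Qed.

Theorem lemma2 (R : realFieldType) (c Tmax alpha : R) :
  1 <= c ->
  exists2 C : R, 0 < C & exists D0 : nat,
    forall (V : finType) (e : rel V),
      simple_graph e -> connected_graph e ->
      forall D : nat, (D0 <= D)%N -> @uniform R V e D c ->
      forall T : nat,
        @is_mixing_time R V e ((2 * c * (#|V|)%:R) ^+ 2)^-1 T ->
        T%:R <= Tmax ->
      forall S : {set {set V}}, S \subset edges e ->
      forall t : nat, t%:R * (#|S|)%:R <= alpha * (nedges e)%:R ->
        C * (t%:R * (#|S|)%:R) / (T%:R * (nedges e)%:R) <= @P_ge1 R V e S t.
Proof.
move=> c1; exists (8 * (1 + `|alpha|))^-1; first by rewrite invr_gt0; have := normr_ge0 alpha; lra.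
exists 1%N => V e [e_sym e_irr] _ D D1 unifD T /mixing_time_upper mixed _ S SE t tS_le.
have deg_gt0 v : (0 < deg e v)%N := leq_trans D1 (unifD v).1.
have P0 : 0 <= P_ge1 R e S t by apply: sumr_ge0 => w _; apply: walk_prob_ge0.
case: (posnP T) => [->|T0]; first by rewrite mul0r invr0 mulr0.
case: (posnP #|S|) => [->|S0]; first by rewrite !mulr0 mul0r.
have SE_card := subset_leq_card SE; have E0 : (0 < nedges e)%N := leq_trans S0 SE_card.
have [m [m_le mS_le cases]] := exists_stride_count t T S0 SE_card.
apply: le_trans (scaled_rate_le T0 E0 tS_le cases) _.
have q_E : (ncross e S)%:R / (2 * (nedges e)%:R) = #|S|%:R / (nedges e)%:R :> R.
  by rewrite ncross_card // natrM; field; rewrite pnatr_eq0 -lt0n.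
rewrite -q_E; apply: (P_ge1_ge_strided deg_gt0 e_sym _ mixed) => //.
- by rewrite invr_ge0 sqr_ge0.
- exact: mixing_delta_le c1 E0 (nedges_le e_irr e_sym).
by rewrite q_E mulrA ler_pdivrMr ?ltr0n // mul1r -natrM ler_nat.
Qed.
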